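(* Let $k$ be a perfect field of characteristic $p>0$, $P$ a finite poset, $R=\mathcal{R}_k[J(P)]$ the Hibi ring and $\mathfrak{m}=R_+$. Let $\overline{P}=P\cup\{-\infty,\infty\}$ and let $\Sigma$ be the set of functions $\psi:\overline{P}\to\mathbb{R}$ such that $\psi(\infty)=0$ and $0\le\psi(x)-\psi(y)\le1$ whenever $x\lessdot y$ in $\overline{P}$. Then \[ \operatorname{fpt}(\mathfrak{m})=\max\{\psi(-\infty)\mid\psi\in\Sigma\}. \]
   Context: $J(P)$ is the set of poset ideals of $P=\{p_1,\dots,p_N\}$ (down-closed subsets, including $\emptyset$ and $P$). The Hibi ring is $\mathcal{R}_k[J(P)]=k[\,T\prod_{p_i\in I}X_i\mid I\in J(P)\,]\subseteq k[T,X_1,\dots,X_N]$, each generator in degree $1$; $\mathfrak{m}=R_+$ is generated by these generators. In $\overline{P}$, $-\infty<x<\infty$ for all $x\in P$; $x\lessdot y$ means $x<y$ with no $z$ satisfying $x<z<y$. For a real $t\ge0$, the pair $(R,\mathfrak{m}^t)$ is $F$-pure if for all large $q=p^e$ there is $d\in\mathfrak{m}^{\lceil t(q-1)\rceil}$ such that the $R$-linear map $R\to R^{1/q}$, $1\mapsto d^{1/q}$, splits; $\operatorname{fpt}(\mathfrak{m})=\sup\{t\ge0\mid(R,\mathfrak{m}^t)\text{ is }F\text{-pure}\}$. *)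

From HB Require Import structures.
From mathcomp Require Import all_boot all_order all_algebra.
From mathcomp Require Import reals.
From mathcomp Require Import mpoly.

Set Implicit Arguments.
Unset Strict Implicit.
Unset Printing Implicit Defensive.

Import Order.TTheory GRing.Theory Num.Theory.
Local Open Scope ring_scope.

Definition perfect_field (k : fieldType) (p : nat) : Prop :=
  forall x : k, exists y : k, y ^+ p = x.

Section Hibi.
Variables (k : fieldType) (disp : Order.disp_t) (P : finPOrderType disp).

(* The ambient polynomial ring k[T, X_x (x in P)]: variable 0 is T,
   variable (lift 0 (enum_rank x)) is X_x. *)
Definition nvars := #|P|.+1.
Definition polyR := {mpoly k[nvars]}.
Definition varT : 'I_nvars := ord0.
Definition varX (x : P) : 'I_nvars := lift ord0 (enum_rank x).

Definition poset_ideal (I : {set P}) : Prop :=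
  forall x y : P, (y <= x)%O -> x \in I -> y \in I.

Definition hibi_gen (I : {set P}) : polyR :=
  'X_varT * \prod_(x in I) 'X_(varX x).

Inductive inHibi : polyR -> Prop :=
| Hibi_gen I : poset_ideal I -> inHibi (hibi_gen I)
| Hibi_const (c : k) : inHibi c%:MP
| Hibi_add f g : inHibi f -> inHibi g -> inHibi (f + g)
| Hibi_mul f g : inHibi f -> inHibi g -> inHibi (f * g).

Inductive inM : polyR -> Prop :=
| M_gen r I : inHibi r -> poset_ideal I -> inM (r * hibi_gen I)
| M_add f g : inM f -> inM g -> inM (f + g).

Inductive inMpow : nat -> polyR -> Prop :=
| Mpow0 f : inHibi f -> inMpow 0 f
| MpowS n a b : inMpow n a -> inM b -> inMpow n.+1 (a * b)
| Mpow_add n f g : inMpow n f -> inMpow n g -> inMpow n (f + g).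

(* The R-linear map R -> R^{1/q}, 1 |-> d^{1/q} splits.  Identifying R^{1/q}
   with R via s^{1/q} <-> s (so that r . s^{1/q} = (r^q s)^{1/q}), a splitting
   is an R-linear phi : R^{1/q} -> R with phi(d^{1/q}) = 1. *)
Definition frob_splits (q : nat) (d : polyR) : Prop :=
  exists phi : polyR -> polyR,
    [/\ forall s, inHibi s -> inHibi (phi s),
        forall s1 s2, inHibi s1 -> inHibi s2 -> phi (s1 + s2) = phi s1 + phi s2,
        forall r s, inHibi r -> inHibi s -> phi (r ^+ q * s) = r * phi s
      & phi d = 1].

Definition Fpure_pair (R : realType) (p : nat) (t : R) : Prop :=
  exists e0 : nat, forall e : nat, (e0 <= e)%N ->
    exists d : polyR,
      inMpow `|Num.ceil (t * ((p ^ e).-1)%:R)|%N d /\ frob_splits (p ^ e) d.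

Definition is_fpt (R : realType) (p : nat) (c : R) : Prop :=
  (forall t : R, 0 <= t -> Fpure_pair p t -> t <= c) /\
  (forall b : R, (forall t : R, 0 <= t -> Fpure_pair p t -> t <= b) -> c <= b).

End Hibi.

Inductive pbar (T : Type) : Type :=
| PBot : pbar T
| PElt : T -> pbar T
| PTop : pbar T.
Arguments PBot {T}.
Arguments PTop {T}.

Section Pbar.
Variables (disp : Order.disp_t) (P : finPOrderType disp).

Definition pbar_lt (a b : pbar P) : Prop :=
  match a, b with
  | PBot, PBot => False
  | PBot, _ => True
  | PElt x, PElt y => (x < y)%O
  | PElt _, PTop => True
  | _, _ => False
  end.

Definition pbar_covers (a b : pbar P) : Prop :=
  pbar_lt a b /\ forall c, ~ (pbar_lt a c /\ pbar_lt c b).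

Definition in_Sigma (R : realType) (psi : pbar P -> R) : Prop :=
  psi PTop = 0 /\
  forall a b, pbar_covers a b -> 0 <= psi a - psi b /\ psi a - psi b <= 1.

End Pbar.

(* Monomials of the Hibi ring are the T^v(-oo) * prod_x X_x^v(x) for the
   maps v : P u {-oo, oo} -> Z>=0 that are order-reversing with v(oo) = 0,
   and m^N is spanned by those with v(-oo) >= N.

   Upper bound: let phi split R -> R^{1/q} at d.  Some monomial X^v of d has
   phi(X^v) with nonzero constant term.  Then every cover jump of v is at most
   q - 1: otherwise, cut P u {-oo, oo} along the elements that cannot descend
   to the top of a large jump through small jumps; moving a q-th power across
   the cut rewrites X^v as a monomial of R times a q-th power in two ways, and
   R-linearity forces the constant term to vanish.  Small jumps mean
   v / (q - 1) is in Sigma, so d lies in no m^N with N > (q - 1) max Sigma.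

   Lower bound: max Sigma is attained by an integer-valued psi (round up).
   The monomial d = X^((q - 1) psi) lies in m^((q - 1) psi(-oo)), and taking
   the coefficients of the monomials d X^(q w), divided out and q-th rooted,
   is a splitting at d. *)
From HB Require Import structures.
From mathcomp Require Import all_boot all_order all_algebra.
From mathcomp Require Import reals boolp.
From mathcomp Require Import mpoly.
From mathcomp Require Import zify ring lra.
Import Order.TTheory GRing.Theory Num.Theory.
Local Open Scope ring_scope.
Set Implicit Arguments.
Unset Strict Implicit.
Unset Printing Implicit Defensive.

(** * The order of P u {-oo, oo} *)

Section PbarOrder.
Variables (disp : Order.disp_t) (P : finPOrderType disp).
Local Notation pb := (pbar P).

Lemma pbar_lt_trans (a b c : pb) : pbar_lt a b -> pbar_lt b c -> pbar_lt a c.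
Proof.
by case: a => [|x|]; case: b => [|y|]; case: c => [|z|] //=; exact: lt_trans.
Qed.

Lemma pbar_lt_irr (a : pb) : ~ pbar_lt a a.
Proof. by case: a => [|x|] //=; rewrite ltxx. Qed.

Lemma pbar_lt_top (a : pb) : a <> PTop -> pbar_lt a PTop.
Proof. by case: a. Qed.

Definition pbar_rank (a : pb) : nat :=
  match a with
  | PBot => #|P|.+1
  | PElt x => #|[set y | (x < y)%O]|.+1
  | PTop => 0
  end.

Lemma pbar_rank_lt (a b : pb) : pbar_lt a b -> (pbar_rank b < pbar_rank a)%N.
Proof.
case: a => [|x|]; case: b => [|y|] //=.
- move=> _; rewrite ltnS; apply: (@leq_trans #|[set: P] :\ y|.+1).
    rewrite ltnS; apply/subset_leq_card/subsetP => z; rewrite !inE => yz.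
    by rewrite andbT; apply: contraTneq yz => ->; rewrite ltxx.
  by rewrite -cardsT [X in (_ <= X)%N](cardsD1 y) inE.
- move=> xy; rewrite ltnS; apply/proper_card/properP; split.
    by apply/subsetP => z; rewrite !inE => /(lt_trans xy).
  by exists y; rewrite !inE ?ltxx.
Qed.

Lemma exists_cover (a b : pb) : pbar_lt a b ->
  exists c, pbar_covers a c /\ (c = b \/ pbar_lt c b).
Proof.
move=> ab; pose S := [set y : P | `[< pbar_lt a (PElt y) /\ pbar_lt (PElt y) b >]].
have inS y : y \in S <-> pbar_lt a (PElt y) /\ pbar_lt (PElt y) b.
  by rewrite inE; split => /asboolP.
case: (set_0Vmem S) => [S0|[y0 /(arg_minnP (fun y => #|[set z | (z < y)%O]|))]].
  exists b; split; last by left.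
  split => // -[|z|] [az zb] //; first by case: (a) az.
  by have /inS := conj az zb; rewrite S0 inE.
case=> y /inS [ay yb] ymin; exists (PElt y); split; last by right.
split => // -[|z|] [az zy] //; first by case: (a) az.
have /ymin : z \in S by apply/inS; split => //; exact: pbar_lt_trans yb.
rewrite leqNgt => /negP; apply; apply/proper_card/properP; split.
  by apply/subsetP => w; rewrite !inE => /lt_trans; apply.
by exists z; rewrite !inE ?ltxx.
Qed.

Lemma pbar_lt_ind (Q : pb -> pb -> Prop) :
  (forall a b, pbar_covers a b -> Q a b) ->
  (forall a b c, Q a b -> Q b c -> Q a c) ->
  forall a b, pbar_lt a b -> Q a b.
Proof.
move=> Qcov Qtrans.
suff Qrank n a : (pbar_rank a <= n)%N -> forall b, pbar_lt a b -> Q a b.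
  by move=> a; apply: (Qrank (pbar_rank a)).
elim: n a => [|n IH] a rank_a b ab.
  by move: (pbar_rank_lt ab); rewrite ltnNge (leq_trans rank_a).
have [c [ac [<-|cb]]] := exists_cover ab; first exact: Qcov.
apply: Qtrans (Qcov _ _ ac) (IH _ _ _ cb).
by rewrite -ltnS (leq_trans (pbar_rank_lt ac.1)).
Qed.

Section CoverAntitone.
Variables (d : Order.disp_t) (T : preorderType d).

Definition cover_antitone (f : pb -> T) :=
  forall a b, pbar_covers a b -> (f b <= f a)%O.

Lemma cover_antitone_lt f : cover_antitone f ->
  forall a b, pbar_lt a b -> (f b <= f a)%O.
Proof. by move=> fcov; apply: pbar_lt_ind => // a b c ab bc; exact: le_trans bc ab. Qed.

Lemma cover_antitone_top f a : cover_antitone f -> (f PTop <= f a)%O.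
Proof.
by move=> fcov; case: a => [|x|]; rewrite ?lexx //; exact: cover_antitone_lt.
Qed.

Lemma cover_antitone_bot f a : cover_antitone f -> (f a <= f PBot)%O.
Proof.
by move=> fcov; case: a => [|x|]; rewrite ?lexx //; exact: cover_antitone_lt.
Qed.

End CoverAntitone.
End PbarOrder.

(** * The polytope Sigma *)

Section Sigma.
Variables (R : realType) (disp : Order.disp_t) (P : finPOrderType disp).
Local Notation pb := (pbar P).

Lemma Sigma_cover_antitone (psi : pb -> R) : in_Sigma psi -> cover_antitone psi.
Proof. by case=> _ psi_step a b /psi_step[]; rewrite subr_ge0. Qed.

Lemma Sigma_ge0 (psi : pb -> R) a : in_Sigma psi -> 0 <= psi a.
Proof.
by move=> Spsi; rewrite -Spsi.1; exact/cover_antitone_top/Sigma_cover_antitone.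
Qed.

Lemma Sigma_le_rank (psi : pb -> R) a : in_Sigma psi -> psi a <= (pbar_rank a)%:R.
Proof.
case=> psi_top psi_step.
suff le_rank n b : (pbar_rank b <= n)%N -> psi b <= (pbar_rank b)%:R.
  exact: le_rank.
elim: n b => [|n IH] b rank_b.
  by case: b rank_b => [|x|] //= _; rewrite psi_top.
have [->|/pbar_lt_top] : b = PTop \/ b <> PTop by case: (b); [right|right|left].
  by rewrite psi_top.
case/exists_cover=> c [bc _]; have rank_bc := pbar_rank_lt bc.1.
have psi_c : psi c <= (pbar_rank c)%:R.
  by apply: IH; rewrite -ltnS (leq_trans rank_bc).
have [_ step] := psi_step _ _ bc.
have : (pbar_rank c)%:R + 1 <= (pbar_rank b)%:R :> R by rewrite natr1 ler_nat.
lra.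
Qed.

Lemma Sigma_ceil (psi : pb -> R) : in_Sigma psi ->
  in_Sigma (fun a => (`|Num.ceil (psi a)|%N)%:R : R).
Proof.
move=> Spsi; have [psi_top psi_step] := Spsi.
have ceilE a : (`|Num.ceil (psi a)|%N)%:R = (Num.ceil (psi a))%:~R :> R.
  by rewrite natr_absz ger0_norm // ceil_ge0 (lt_le_trans _ (Sigma_ge0 a Spsi)) ?ltrN10.
split; first by rewrite ceilE psi_top ceil0.
move=> a b /psi_step[]; rewrite !ceilE -intrB ler0z lerz1 subr_ge0 => ba ab1.
have c1 : Num.ceil (psi b) <= Num.ceil (psi a) by exact: le_ceil.
have c2 : Num.ceil (psi a) <= Num.ceil (psi b) + 1.
  by rewrite -(ceil1 R) -ceilDrz ?rpred1 //; apply: le_ceil; rewrite -lerBlDl.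
by split; lia.
Qed.

Lemma Sigma_nat_step (K : pb -> nat) : in_Sigma (fun a => (K a)%:R : R) ->
  K PTop = 0%N /\ forall a b, pbar_covers a b -> (K b <= K a <= (K b).+1)%N.
Proof.
case=> K_top K_step; split; first by apply/eqP; rewrite -(eqr_nat R) K_top.
by move=> a b /K_step[]; rewrite subr_ge0 lerBlDl natr1 !ler_nat => ->.
Qed.

Lemma Sigma_max : exists K : pb -> nat, in_Sigma (fun a => (K a)%:R : R) /\
  forall psi : pb -> R, in_Sigma psi -> psi PBot <= (K PBot)%:R.
Proof.
pose attained n := `[< exists K : pb -> nat, in_Sigma (fun a => (K a)%:R : R) /\ K PBot = n >].
have attained0 : exists n, attained n.
  exists 0%N; apply/asboolP; exists (fun=> 0%N); split => //.
  by split => // a b _; rewrite subrr lexx ler01.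
have attained_le n : attained n -> (n <= #|P|.+1)%N.
  by case/asboolP=> K [/(Sigma_le_rank PBot)]; rewrite ler_nat => le <-.
case: (ex_maxnP attained0 attained_le) => n /asboolP[K [SK <-]] Kmax.
exists K; split => // psi Spsi.
have /Kmax : attained `|Num.ceil (psi PBot)|%N.
  by apply/asboolP; exists (fun a => `|Num.ceil (psi a)|%N); split => //; exact: Sigma_ceil.
rewrite -(ler_nat R); apply: le_trans.
by apply: le_trans (ceil_ge _) _; rewrite natr_absz ler_int ler_norm.
Qed.

End Sigma.

(** * Exponents of the monomials of the Hibi ring *)

Section Exponents.
Variables (disp : Order.disp_t) (P : finPOrderType disp).
Local Notation pb := (pbar P).
Local Notation mnm := 'X_{1..nvars P}.
Local Notation vT := (varT P).

Definition mnm_fun (m : mnm) (a : pb) : int :=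
  match a with PBot => (m vT)%:Z | PElt x => (m (varX x))%:Z | PTop => 0 end.

Definition hibi_exponent (f : pb -> int) := f PTop = 0 /\ cover_antitone f.

Definition hibi_mnm (m : mnm) := hibi_exponent (mnm_fun m).

Lemma eq_hibi_exponent (f g : pb -> int) :
  f =1 g -> hibi_exponent f -> hibi_exponent g.
Proof. by move=> fg [f_top f_cov]; split => [|a b]; rewrite -!fg //; apply: f_cov. Qed.

Lemma hibi_exponent_ge0 f a : hibi_exponent f -> 0 <= f a.
Proof. by case=> f_top f_cov; rewrite -f_top; exact: cover_antitone_top. Qed.

Lemma hibi_exponent_le_bot f a : hibi_exponent f -> f a <= f PBot.
Proof. by case=> _; exact: cover_antitone_bot. Qed.

Lemma hibi_exponent_rank : hibi_exponent (fun a => (pbar_rank a)%:Z).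
Proof. by split => // a b [ab _]; rewrite lez_nat ltnW // pbar_rank_lt. Qed.

Lemma varX_neqT (x : P) : varX x != vT.
Proof. by rewrite eq_sym; apply: neq_lift. Qed.

Lemma varX_inj : injective (@varX _ P).
Proof. by move=> x y /lift_inj /enum_rank_inj. Qed.

Lemma var_cases (i : 'I_(nvars P)) : i = vT \/ exists x, i = varX x.
Proof.
case: (unliftP ord0 i) => [j ->|->]; last by left.
by right; exists (enum_val j); rewrite /varX enum_valK.
Qed.

Lemma mnm_fun_inj (m1 m2 : mnm) : mnm_fun m1 =1 mnm_fun m2 -> m1 = m2.
Proof.
move=> m12; apply/mnmP => i; case: (var_cases i) => [->|[x ->]].
  by have [] := m12 PBot.
by have [] := m12 (PElt x).
Qed.

Lemma mnm_fun_lep (m1 m2 : mnm) :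
  (forall a, mnm_fun m1 a <= mnm_fun m2 a) -> (m1 <= m2)%MM.
Proof.
move=> m12; apply/mnm_lepP => i; case: (var_cases i) => [->|[x ->]].
  by have := m12 PBot; rewrite lez_nat.
by have := m12 (PElt x); rewrite lez_nat.
Qed.

Lemma mnm_fun0 a : mnm_fun 0%MM a = 0.
Proof. by case: a => [|x|] //=; rewrite mnm0E. Qed.

Lemma mnm_funD m1 m2 a : mnm_fun (m1 + m2)%MM a = mnm_fun m1 a + mnm_fun m2 a.
Proof. by case: a => [|x|] //=; rewrite mnmDE PoszD. Qed.

Lemma mnm_funMn m c a : mnm_fun (m *+ c)%MM a = mnm_fun m a * c%:Z.
Proof. by case: a => [|x|] //=; rewrite mulmnE PoszM. Qed.

Lemma mnm_funB m1 m2 a : (m2 <= m1)%MM ->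
  mnm_fun (m1 - m2)%MM a = mnm_fun m1 a - mnm_fun m2 a.
Proof.
by move/mnm_lepP => m21; case: a => [|x|] //=; rewrite mnmBE ?subr0 // subzn.
Qed.

Lemma hibi_mnm0 : hibi_mnm 0%MM.
Proof. by split => [|a b _]; rewrite ?mnm_fun0. Qed.

Lemma hibi_mnmD m1 m2 : hibi_mnm m1 -> hibi_mnm m2 -> hibi_mnm (m1 + m2)%MM.
Proof.
move=> [m1_top m1_cov] [m2_top m2_cov]; split; first by rewrite mnm_funD m1_top m2_top.
by move=> a b ab; rewrite !mnm_funD lerD ?m1_cov ?m2_cov.
Qed.

Definition mnm_of (f : pb -> int) : mnm :=
  [multinom match unlift ord0 i with
            | None => `|f PBot|%N
            | Some j => `|f (PElt (enum_val j))|%N end | i < nvars P].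

Lemma mnm_ofK f : hibi_exponent f -> mnm_fun (mnm_of f) =1 f.
Proof.
move=> hf a; have f_ge0 := hibi_exponent_ge0 _ hf.
case: a => [|x|] /=; last by rewrite hf.1.
  by rewrite mnmE /varT unlift_none gez0_abs.
by rewrite mnmE /varX liftK enum_rankK gez0_abs.
Qed.

Lemma hibi_mnm_of f : hibi_exponent f -> hibi_mnm (mnm_of f).
Proof. by move=> hf; exact: eq_hibi_exponent (fsym (mnm_ofK hf)) hf. Qed.

Definition ideal_mnm (I : {set P}) : mnm := (U_(vT) + \sum_(x in I) U_(varX x))%MM.

Lemma mnm_fun_ideal (I : {set P}) a :
  mnm_fun (ideal_mnm I) a =
    match a with PBot => 1 | PElt y => (y \in I)%:Z | PTop => 0 end.
Proof.
case: a => [|y|] //=; rewrite mnmDE mnm_sumE mnm1E.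
  by rewrite eqxx big1 // => x _; rewrite mnm1E (negbTE (varX_neqT x)).
rewrite eq_sym (negbTE (varX_neqT y)) add0n.
under eq_bigr => x _ do rewrite mnm1E (inj_eq varX_inj).
case: (boolP (y \in I)) => yI; last by rewrite big1 // => x xI; case: eqP yI => // <-; rewrite xI.
by rewrite (bigD1 y) //= eqxx big1 ?addn0 // => x /andP[_ /negbTE ->].
Qed.

Lemma hibi_mnm_ideal (I : {set P}) : poset_ideal I -> hibi_mnm (ideal_mnm I).
Proof.
move=> hI; split; first by rewrite mnm_fun_ideal.
move=> a b [ab _]; rewrite !mnm_fun_ideal.
case: a b ab => [|x|] [|y|] //= xy; try by case: (_ \in _).
by case: (boolP (y \in I)) => // /(hI y x (ltW xy)) ->.
Qed.

End Exponents.

(** * Cutting an exponent along a large jump *)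

Section Cut.
Variables (disp : Order.disp_t) (P : finPOrderType disp).
Local Notation pb := (pbar P).

Section Reaches.
Variables (f : pb -> int) (n : int) (z : pb).

Inductive reaches : pb -> Prop :=
| reaches_refl : reaches z
| reaches_cover a b : pbar_covers a b -> f a - f b <= n -> reaches b -> reaches a.

Lemma reaches_le a : reaches a -> a = z \/ pbar_lt a z.
Proof.
elim=> [|{}a b ab _ _ IH]; first by left.
right; case: IH => [<-|bz]; first exact: ab.1.
exact: pbar_lt_trans ab.1 bz.
Qed.

Lemma cover_not_reaches a : pbar_covers a z -> n < f a - f z -> ~ reaches a.
Proof.
move=> az jump r; case: r az jump => [|{}a b ab small /reaches_le [bz|bz]] az jump.
- by case: az => /pbar_lt_irr.
- by move: small; rewrite bz leNgt jump.
- by case: az => _ /(_ b); apply; split => //; case: ab.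
Qed.

End Reaches.

Lemma exists_cut (q : nat) (f : pb -> int) z1 z2 : hibi_exponent f ->
  pbar_covers z1 z2 -> q%:Z <= f z1 - f z2 ->
  exists chi : pb -> int, [/\ chi z1 = 1, chi z2 = 0,
    hibi_exponent (fun a => (pbar_rank a)%:Z + chi a - chi PTop) &
    hibi_exponent (fun a => f a + q%:Z * chi PTop - q%:Z * chi a)].
Proof.
move=> [f_top f_cov] c12 jump.
pose chi a : int := (~~ `[< reaches f (q%:Z - 1) z2 a >] : nat)%:Z.
have chi01 a : 0 <= chi a <= 1 by rewrite /chi; case: (~~ _).
exists chi; split.
- by rewrite /chi asboolF //; apply: cover_not_reaches => //; lia.
- by rewrite /chi asboolT //; exact: reaches_refl.
- split=> [|a b ab]; first by rewrite /= add0r subrr.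
  have := pbar_rank_lt ab.1; rewrite -ltz_nat; move: (chi01 a) (chi01 b).
  lia.
- split=> [|a b ab]; first by rewrite f_top add0r subrr.
  have fab := f_cov a b ab.
  suff : f b - q%:Z * chi b <= f a - q%:Z * chi a by rewrite /=; lia.
  rewrite /chi; case: (asboolP (reaches f _ z2 b)) => rb;
    case: (asboolP (reaches f _ z2 a)) => ra /=; try lia.
  case: (lerP (f a - f b) (q%:Z - 1)) => [small|]; last lia.
  by case: ra; exact: reaches_cover ab small rb.
Qed.

End Cut.

(** * Monomials of the Hibi ring and the powers of its irrelevant ideal *)

Section HibiRing.
Variables (k : fieldType) (disp : Order.disp_t) (P : finPOrderType disp).
Local Notation pb := (pbar P).
Local Notation mnm := 'X_{1..nvars P}.
Local Notation pR := (polyR k P).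
Local Notation vT := (varT P).

Lemma hibi_genE (I : {set P}) : hibi_gen k I = 'X_[ideal_mnm I].
Proof. by rewrite /hibi_gen mprodXE -mpolyXD. Qed.

Lemma inHibi0 : inHibi (0 : pR).
Proof. by have := @Hibi_const k _ P 0; rewrite mpolyC0. Qed.

Lemma inHibi1 : inHibi (1 : pR).
Proof. by have := @Hibi_const k _ P 1; rewrite mpolyC1. Qed.

Lemma inHibi_msupp (f : pR) m : inHibi f -> m \in msupp f -> hibi_mnm m.
Proof.
move=> hf; elim: hf m => [I hI|c|f1 g _ Hf _ Hg|f1 g _ Hf _ Hg] m.
- by rewrite hibi_genE msuppX mem_seq1 => /eqP ->; exact: hibi_mnm_ideal.
- by rewrite msuppC; case: (c == 0) => //; rewrite mem_seq1 => /eqP ->; exact: hibi_mnm0.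
- by move/msuppD_le; rewrite mem_cat => /orP[]; [exact: Hf|exact: Hg].
- move/msuppM_le => /allpairsP[[m1 m2] /= [m1f m2g ->]].
  by apply: hibi_mnmD; [exact: Hf|exact: Hg].
Qed.

Lemma inM_inHibi (f : pR) : inM f -> inHibi f.
Proof.
by elim=> [r I hr hI|f1 g _ Hf _ Hg]; [apply: Hibi_mul => //; apply: Hibi_gen|exact: Hibi_add].
Qed.

Lemma inMpow_inHibi N (f : pR) : inMpow N f -> inHibi f.
Proof.
elim=> // [n a b _ ha /inM_inHibi hb|n f1 g _ Hf _ Hg]; [exact: Hibi_mul|exact: Hibi_add].
Qed.

(* The elements of P where [m] is maximal form an ideal I; dividing by the
   generator of I lowers the T-degree by one and stays in the Hibi ring. *)
Lemma hibi_mnm_peel (m : mnm) N : hibi_mnm m -> m vT = N.+1 ->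
  exists2 I, poset_ideal I &
    [/\ (ideal_mnm I <= m)%MM, hibi_mnm (m - ideal_mnm I)%MM & (m - ideal_mnm I)%MM vT = N].
Proof.
move=> hm mN; pose I := [set x : P | m (varX x) == N.+1].
have m_le x : (m (varX x) <= N.+1)%N.
  by have := hibi_exponent_le_bot (PElt x) hm; rewrite /= mN lez_nat.
have inI x : (x \in I) = (m (varX x) == N.+1) by rewrite inE.
have m_anti x y : (y <= x)%O -> (m (varX x) <= m (varX y))%N.
  rewrite le_eqVlt => /orP[/eqP -> //|yx].
  by have := cover_antitone_lt hm.2 (a := PElt y) (b := PElt x) yx; rewrite lez_nat.
have hI : poset_ideal I.
  by move=> x y /m_anti yx; rewrite !inI => /eqP mx; rewrite eqn_leq m_le -mx.
have Im : (ideal_mnm I <= m)%MM.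
  apply: mnm_fun_lep => -[|y|]; rewrite mnm_fun_ideal //= ?mN //.
  by rewrite inI; case: eqP => [->|].
have fB a : mnm_fun (m - ideal_mnm I)%MM a = mnm_fun m a - mnm_fun (ideal_mnm I) a.
  exact: mnm_funB.
exists I => //; split => //; last first.
  by have := fB PBot; rewrite mnm_fun_ideal /= mN => -[]; lia.
split; first by rewrite fB mnm_fun_ideal hm.1.
move=> a b ab; rewrite !fB !mnm_fun_ideal.
case: a b ab => [|x|] [|y|] [ab _] //=; rewrite ?inI ?mN.
- by move: (m_le y); case: eqP; lia.
- lia.
- have := m_anti y x (ltW ab); move: (m_le x) (m_le y); case: eqP; case: eqP; lia.
- by move: (m_le x); case: eqP; lia.
Qed.

Lemma inMpow_X N (m : mnm) : hibi_mnm m -> m vT = N -> inMpow N ('X_[m] : pR).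
Proof.
elim: N m => [|N IH] m hm mN.
  have -> : m = 0%MM.
    apply: mnm_fun_inj => a; rewrite mnm_fun0; apply/eqP; rewrite eq_le.
    by rewrite hibi_exponent_ge0 // andbT (le_trans (hibi_exponent_le_bot a hm)) //= mN.
  by rewrite mpolyX0; apply: Mpow0; exact: inHibi1.
have [I hI [Im hmI mIN]] := hibi_mnm_peel hm mN.
rewrite -(submK Im) mpolyXD; apply: MpowS; first exact: IH.
by rewrite -hibi_genE -[hibi_gen _ _]mul1r; apply: M_gen => //; exact: inHibi1.
Qed.

Lemma inHibi_X (m : mnm) : hibi_mnm m -> inHibi ('X_[m] : pR).
Proof. by move=> hm; exact: inMpow_inHibi (inMpow_X hm (erefl _)). Qed.

Lemma inHibi_msuppP (f : pR) : (forall m, m \in msupp f -> hibi_mnm m) -> inHibi f.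
Proof.
move=> fsupp; rewrite (mpolyE f) big_seq; apply: big_ind.
- exact: inHibi0.
- exact: Hibi_add.
- by move=> m /fsupp hm; rewrite -mul_mpolyC; apply: Hibi_mul; [exact: Hibi_const|exact: inHibi_X].
Qed.

Lemma inMpow_mulr N (a r : pR) : inMpow N a -> inHibi r -> inMpow N (a * r).
Proof.
move=> ha hr; elim: ha => [f hf|n a0 b _ IH hb|n f g _ IHf _ IHg].
- by constructor; apply: Hibi_mul.
- by rewrite mulrAC; apply: MpowS.
- by rewrite mulrDl; apply: Mpow_add.
Qed.

Lemma inMpow_mul A B (x y : pR) : inMpow A x -> inMpow B y -> inMpow (A + B) (x * y).
Proof.
move=> hx; elim=> [f hf|n a0 b _ IH hb|n f g _ IHf _ IHg].
- by rewrite addn0; apply: inMpow_mulr.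
- by rewrite addnS mulrA; apply: MpowS.
- by rewrite mulrDr; apply: Mpow_add.
Qed.

Lemma inMpow_exp A c (x : pR) : inMpow A x -> inMpow (A * c) (x ^+ c).
Proof.
move=> hx; elim: c => [|c IH]; last by rewrite mulnS exprS; apply: inMpow_mul.
by rewrite muln0 expr0; constructor; exact: inHibi1.
Qed.

Lemma inM_msupp_deg (f : pR) m : inM f -> m \in msupp f -> (0 < m vT)%N.
Proof.
move=> hf; elim: hf m => [r I hr hI|f1 g _ Hf _ Hg] m.
- rewrite hibi_genE => /msuppM_le /allpairsP[[m1 m2] /= [_]].
  rewrite msuppX mem_seq1 => /eqP -> ->.
  by have := mnm_fun_ideal I PBot; rewrite /= mnmDE => -[->]; rewrite addn1.
- by move/msuppD_le; rewrite mem_cat => /orP[]; [exact: Hf|exact: Hg].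
Qed.

Lemma inMpow_msupp_deg N (f : pR) m : inMpow N f -> m \in msupp f -> (N <= m vT)%N.
Proof.
move=> hf; elim: hf m => // [n a b _ ha hb|n f1 g _ Hf _ Hg] m.
- move/msuppM_le => /allpairsP[[m1 m2] /= [m1a m2b ->]].
  by rewrite mnmDE -addn1 leq_add ?ha // (inM_msupp_deg hb).
- by move/msuppD_le; rewrite mem_cat => /orP[]; [exact: Hf|exact: Hg].
Qed.

End HibiRing.

(** * Frobenius powers and their inverses *)

Lemma pchar_pnat_expn (R : nzSemiRingType) p e : p \in [pchar R] -> [pchar R].-nat (p ^ e)%N.
Proof.
move=> pchar_p; rewrite (eq_pnat _ (pcharf_eq pchar_p)) pnatX pnat_id //.
exact: pcharf_prime pchar_p.
Qed.

Lemma exprD_pchar_expn (R : comNzSemiRingType) p e (x y : R) : p \in [pchar R] ->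
  (x + y) ^+ (p ^ e) = x ^+ (p ^ e) + y ^+ (p ^ e).
Proof. by move=> pchar_p; apply/exprDn_pchar/pchar_pnat_expn. Qed.

Lemma pchar_expn_gt0 (R : nzSemiRingType) p e : p \in [pchar R] -> (0 < p ^ e)%N.
Proof. by move=> pchar_p; rewrite expn_gt0 prime_gt0 // (pcharf_prime pchar_p). Qed.

Lemma expr_sum_pchar_expn (R : comNzSemiRingType) p e (I : Type) (r : seq I) (F : I -> R) :
  p \in [pchar R] -> (\sum_(i <- r) F i) ^+ (p ^ e) = \sum_(i <- r) F i ^+ (p ^ e).
Proof.
move=> pchar_p; apply: (big_morph (fun x => x ^+ (p ^ e))) => [x y|].
  exact: exprD_pchar_expn.
by rewrite expr0n -[_ == _]negbK -lt0n (pchar_expn_gt0 _ pchar_p).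
Qed.

Lemma expr_pchar_expn_inj (R : idomainType) p e : p \in [pchar R] ->
  injective (fun x : R => x ^+ (p ^ e)).
Proof.
move=> pchar_p x y /= xy; apply/eqP; rewrite -subr_eq0.
have := exprD_pchar_expn e (x - y) y pchar_p; rewrite subrK xy => /eqP.
by rewrite -subr_eq subrr eq_sym expf_eq0 => /andP[].
Qed.

Section PerfectRoots.
Variables (k : fieldType) (p : nat).
Hypotheses (pchar_p : p \in [pchar k]) (perf : perfect_field k p).

Lemma perfect_expn_root e (x : k) : exists y, y ^+ (p ^ e) == x.
Proof.
elim: e x => [|e IH] x; first by exists x; rewrite expr1.
have [y /eqP yx] := IH x; have [z zy] := perf y.
by exists z; rewrite expnS exprM zy yx.
Qed.

Definition proot e (x : k) : k := xchoose (perfect_expn_root e x).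

Lemma prootK e x : proot e x ^+ (p ^ e) = x.
Proof. exact/eqP/(xchooseP (perfect_expn_root e x)). Qed.

Lemma exprpK e x : proot e (x ^+ (p ^ e)) = x.
Proof. by apply: (@expr_pchar_expn_inj k p e pchar_p); rewrite /= prootK. Qed.

Lemma prootD e x y : proot e (x + y) = proot e x + proot e y.
Proof. by apply: (@expr_pchar_expn_inj k p e pchar_p); rewrite /= exprD_pchar_expn // !prootK. Qed.

Lemma prootM e x y : proot e (x * y) = proot e x * proot e y.
Proof. by apply: (@expr_pchar_expn_inj k p e pchar_p); rewrite /= exprMn !prootK. Qed.

Lemma proot0 e : proot e 0 = 0.
Proof. by apply: (addrI (proot e 0)); rewrite -prootD !addr0. Qed.

Lemma proot1 e : proot e 1 = 1.
Proof. by rewrite -{1}(expr1n k (p ^ e)%N) exprpK. Qed.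

End PerfectRoots.

Lemma mcoeffXM (R : comNzRingType) n (a b : 'X_{1..n}) (g : {mpoly R[n]}) :
  ('X_[a] * g)@_b = if (a <= b)%MM then g@_(b - a)%MM else 0.
Proof.
rewrite mulrC; case: ifP => ab; first by rewrite -{1}(submK ab) addmC mcoeffMX.
apply/eqP; rewrite mcoeff_eq0; apply/negP.
by rewrite (perm_mem (msuppMX g a)) => /mapP[m _ bE]; rewrite bE lem_addr in ab.
Qed.

(** * The lower bound: a splitting at a monomial of high degree *)

Section LowerBound.
Variables (k : fieldType) (disp : Order.disp_t) (P : finPOrderType disp) (p : nat).
Hypotheses (pchar_p : p \in [pchar k]) (perf : perfect_field k p).
Variable K : pbar P -> nat.
Hypotheses (K_top : K PTop = 0%N)
  (K_step : forall a b, pbar_covers a b -> (K b <= K a <= (K b).+1)%N).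
Local Notation pb := (pbar P).
Local Notation mnm := 'X_{1..nvars P}.
Local Notation pR := (polyR k P).

Lemma hibi_exponent_K : hibi_exponent (fun a => (K a)%:Z).
Proof. by split => [|a b /K_step /andP[]]; rewrite ?K_top ?lez_nat. Qed.

Definition K_mnm : mnm := mnm_of (fun a => (K a)%:Z).

Lemma mnm_fun_K a : mnm_fun K_mnm a = (K a)%:Z.
Proof. exact: mnm_ofK hibi_exponent_K a. Qed.

Section SplitMap.
Variable e : nat.
Local Notation q := (p ^ e)%N.
Local Notation Q := (p ^ e).-1.
Local Notation rq := (proot perf e).

Lemma q_gt0 : (0 < q)%N. Proof. exact: pchar_expn_gt0 pchar_p. Qed.

Definition split_mnm : mnm := (K_mnm *+ Q)%MM.

Lemma mnm_fun_split a : mnm_fun split_mnm a = (K a)%:Z * Q%:Z.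
Proof. by rewrite mnm_funMn mnm_fun_K. Qed.

Definition shift_mnm (v : mnm) : mnm := (split_mnm + v *+ q)%MM.

Definition unshift_mnm (m : mnm) : mnm :=
  [multinom ((m i - split_mnm i) %/ q)%N | i < nvars P].

Lemma shift_mnmK : cancel shift_mnm unshift_mnm.
Proof. by move=> v; apply/mnmP => i; rewrite mnmE mnmDE mulmnE addKn mulnK ?q_gt0. Qed.

Lemma shift_mnm_eq_split v : (shift_mnm v == split_mnm) = (v == 0%MM).
Proof.
apply/eqP/eqP => [/mnmP split_v|->]; apply/mnmP => i; rewrite /shift_mnm.
  by have := split_v i; rewrite mnmDE mulmnE mnm0E; have := q_gt0; nia.
by rewrite mnmDE mulmnE mnm0E mul0n addn0.
Qed.

(* Keeps the terms c X^(split_mnm + q v) of f and sends them to c^(1/q) X^v. *)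
Definition split_map (f : pR) : pR :=
  \sum_(m <- msupp f | shift_mnm (unshift_mnm m) == m) rq f@_m *: 'X_[unshift_mnm m].

Lemma split_map_coef f v : (split_map f)@_v = rq f@_(shift_mnm v).
Proof.
rewrite /split_map raddf_sum /= big_mkcond /=.
under eq_bigr => m _ do rewrite mcoeffZ mcoeffX.
rewrite (eq_bigr (fun m => if m == shift_mnm v then rq f@_m else 0)); last first.
  move=> m _; have [->|ne] := eqVneq m (shift_mnm v).
    by rewrite shift_mnmK !eqxx mulr1.
  have [mE|] := eqVneq (shift_mnm (unshift_mnm m)) m; last by [].
  case: eqP => [umv|_]; last by rewrite mulr0.
  by case/eqP: ne; rewrite -mE umv.
rewrite -big_mkcond /=; case: (boolP (shift_mnm v \in msupp f)) => vf.
  by rewrite -big_filter filter_pred1_uniq ?msupp_uniq // big_seq1.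
rewrite big1_seq => [|m /andP[/eqP -> mf]]; last by rewrite mf in vf.
by rewrite memN_msupp_eq0 // (proot0 pchar_p).
Qed.

Lemma split_mapD f g : split_map (f + g) = split_map f + split_map g.
Proof. by apply/mpolyP => v; rewrite mcoeffD !split_map_coef mcoeffD (prootD pchar_p). Qed.

Lemma split_map0 : split_map 0 = 0.
Proof. by apply/mpolyP => v; rewrite split_map_coef !mcoeff0 (proot0 pchar_p). Qed.

Lemma split_mapZ c g : split_map (c ^+ q *: g) = c *: split_map g.
Proof.
apply/mpolyP => v; rewrite mcoeffZ !split_map_coef mcoeffZ.
by rewrite (prootM pchar_p) (exprpK pchar_p).
Qed.

Lemma split_map_split : split_map 'X_[split_mnm] = 1.
Proof.
apply/mpolyP => v; rewrite split_map_coef mcoeffX mcoeff1 eq_sym shift_mnm_eq_split.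
by case: (v == 0%MM); rewrite ?(proot1 pchar_p) ?(proot0 pchar_p).
Qed.

(* Dividing by a q-th power keeps a Hibi exponent because the steps of
   [split_mnm] along covers are 0 or q - 1 < q. *)
Lemma hibi_exponent_unshift (g : pb -> int) : g PTop = 0 ->
  hibi_exponent (fun a => mnm_fun split_mnm a + q%:Z * g a) -> hibi_exponent g.
Proof.
move=> g_top [_ shift_cov]; split => // a b ab.
have := shift_cov a b ab; rewrite /= !mnm_fun_split.
have /andP[Kba Kab] := K_step ab.
have qQ : q%:Z = Q%:Z + 1 by rewrite -PoszD addn1 prednK ?q_gt0.
rewrite -!lez_nat in Kba Kab; rewrite qQ; case: (lerP (g b) (g a)) => //; nia.
Qed.

Lemma hibi_mnm_unshift v : hibi_mnm (shift_mnm v) -> hibi_mnm v.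
Proof.
move=> hv; apply: hibi_exponent_unshift => //.
by apply: eq_hibi_exponent hv => a; rewrite mnm_funD mnm_funMn mulrC.
Qed.

Lemma split_map_inHibi s : inHibi s -> inHibi (split_map s).
Proof.
move=> hs; apply: inHibi_msuppP => v; rewrite mcoeff_msupp split_map_coef => sv.
apply/hibi_mnm_unshift/(inHibi_msupp hs); rewrite mcoeff_msupp.
by apply: contraNneq sv => ->; rewrite (proot0 pchar_p).
Qed.

Lemma split_map_XM (m : mnm) s : inHibi s ->
  split_map ('X_[m *+ q] * s) = 'X_[m] * split_map s.
Proof.
move=> hs; apply/mpolyP => v; rewrite split_map_coef !mcoeffXM.
have [mv|mv] := boolP (m <= v)%MM.
  have /mnm_lepP mv_i := mv.
  have -> : (m *+ q <= shift_mnm v)%MM.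
    by apply/mnm_lepP => i; rewrite mnmDE !mulmnE; have := mv_i i; nia.
  rewrite split_map_coef; congr (rq s@_ _); apply/mnmP => i.
  by rewrite mnmBE !mnmDE !mulmnE mnmBE mulnBl -addnBA // leq_mul.
case: ifP => mqv; last exact: (proot0 pchar_p).
rewrite memN_msupp_eq0 ?(proot0 pchar_p) //.
apply: contraNN mv => /(inHibi_msupp hs) hv.
have : hibi_exponent (fun a => mnm_fun v a - mnm_fun m a).
  apply: hibi_exponent_unshift; first by rewrite /= subrr.
  apply: eq_hibi_exponent hv => a; rewrite mnm_funB // /shift_mnm mnm_funD !mnm_funMn; ring.
by move/hibi_exponent_ge0 => vm; apply: mnm_fun_lep => a; rewrite -subr_ge0 vm.
Qed.

Lemma split_map_frob r s : inHibi s -> split_map (r ^+ q * s) = r * split_map s.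
Proof.
move=> hs; have pchar_pR : p \in [pchar pR] by rewrite (pchar_lalg pR).
rewrite [in RHS](mpolyE r) [r in LHS](mpolyE r) expr_sum_pchar_expn //.
rewrite mulr_suml (big_morph split_map split_mapD split_map0) mulr_suml.
apply: eq_bigr => m _.
by rewrite exprZn mpolyXn -scalerAl split_mapZ split_map_XM // scalerAl.
Qed.

Lemma frob_splits_split_mnm : frob_splits q ('X_[split_mnm] : pR).
Proof.
exists split_map; split => [s|s1 s2 _ _|r s _|]; last exact: split_map_split.
- exact: split_map_inHibi.
- exact: split_mapD.
- exact: split_map_frob.
Qed.

Lemma inMpow_split_mnm : inMpow (K PBot * Q) ('X_[split_mnm] : pR).
Proof.
rewrite -mpolyXn; apply/inMpow_exp/inMpow_X; first exact: hibi_mnm_of hibi_exponent_K.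
by have [] := mnm_fun_K PBot.
Qed.

End SplitMap.

Lemma Fpure_at_max (R : realType) : Fpure_pair k P p ((K PBot)%:R : R).
Proof.
exists 0%N => e _; exists ('X_[split_mnm e]); split; last exact: frob_splits_split_mnm.
by rewrite -natrM -[X in Num.ceil X]/((_%:Z)%:~R) intrKceil; exact: inMpow_split_mnm.
Qed.

End LowerBound.

(** * The upper bound *)

Section SplittingMaps.
Variables (k : fieldType) (disp : Order.disp_t) (P : finPOrderType disp) (q : nat).
Local Notation mnm := 'X_{1..nvars P}.
Local Notation pR := (polyR k P).
Variable phi : pR -> pR.
Hypotheses (phi_hibi : forall s, inHibi s -> inHibi (phi s))
  (phi_frob : forall r s, inHibi r -> inHibi s -> phi (r ^+ q * s) = r * phi s).

(* Moving the q-th power of the cut [chi] from one factor to the other gives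
   two factorizations X^m1 * phi(X^h) = X^m2 * phi(X^h'), and the constant
   term of phi(X^h) is the coefficient of X^(m1 - m2) in phi(X^h'), which is
   not a Hibi monomial since [chi] drops along the cover z1 < z2. *)
Lemma split_coef0_eq0 (h : mnm) z1 z2 : hibi_mnm h -> pbar_covers z1 z2 ->
  q%:Z <= mnm_fun h z1 - mnm_fun h z2 -> (phi 'X_[h])@_0%MM = 0.
Proof.
move=> hh c12 jump.
have [chi [chi1 chi2 rank_chi h_chi]] := exists_cut hh c12 jump.
have rank := hibi_exponent_rank P.
pose m1 : mnm := mnm_of (fun a => (pbar_rank a)%:Z).
pose m2 : mnm := mnm_of (fun a => (pbar_rank a)%:Z + chi a - chi PTop).
pose h' : mnm := mnm_of (fun a => mnm_fun h a + q%:Z * chi PTop - q%:Z * chi a).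
have X_frob m g : hibi_mnm m -> hibi_mnm g -> phi 'X_[m *+ q + g] = 'X_[m] * phi 'X_[g].
  by move=> hm hg; rewrite mpolyXD -mpolyXn phi_frob //; apply: inHibi_X.
have eqm : (m1 *+ q + h = m2 *+ q + h')%MM.
  by apply: mnm_fun_inj => a; rewrite !mnm_funD !mnm_funMn !mnm_ofK //; ring.
have : 'X_[m1] * phi 'X_[h] = 'X_[m2] * phi 'X_[h'].
  by rewrite -!X_frob ?eqm //; apply: hibi_mnm_of.
have m1m1 : (m1 - m1 = 0)%MM by apply/mnmP => i; rewrite mnmBE subnn mnm0E.
move/(congr1 (mcoeff m1)); rewrite !mcoeffXM lepm_refl m1m1 => ->.
case: ifP => // m21; apply: memN_msupp_eq0; apply/negP.
move/(inHibi_msupp (phi_hibi (inHibi_X k (hibi_mnm_of h_chi)))) => [_ /(_ z1 z2 c12)].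
by rewrite !mnm_funB // !mnm_ofK // chi1 chi2; lia.
Qed.

Lemma split_coef0_jump (h : mnm) a b : hibi_mnm h -> (phi 'X_[h])@_0%MM != 0 ->
  pbar_covers a b -> mnm_fun h a - mnm_fun h b < q%:Z.
Proof. by move=> hh nz ab; rewrite ltNge; apply: contra nz => /(split_coef0_eq0 hh ab)/eqP. Qed.

End SplittingMaps.

Lemma ceil_mulr_nat_gt (R : realType) (K Q : nat) (t : R) : K%:R < t -> (0 < Q)%N ->
  (K * Q < `|Num.ceil (t * Q%:R)|)%N.
Proof.
move=> Kt Q_gt0.
have KQt : (K * Q)%:R < t * Q%:R by rewrite natrM ltr_pM2r ?ltr0n.
have ceil_gt : (K * Q)%:R < (Num.ceil (t * Q%:R))%:~R :> R := lt_le_trans KQt (ceil_ge _).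
rewrite -ltz_nat gez0_abs; first by rewrite -(ltr_int R).
by rewrite -(ler_int R) (le_trans _ (ltW ceil_gt)).
Qed.

Section UpperBound.
Variables (R : realType) (k : fieldType) (disp : Order.disp_t) (P : finPOrderType disp).
Local Notation pb := (pbar P).
Local Notation mnm := 'X_{1..nvars P}.
Local Notation pR := (polyR k P).
Variable K : pb -> nat.
Hypothesis K_max : forall psi : pb -> R, in_Sigma psi -> psi PBot <= (K PBot)%:R.

(* With jumps at most Q, h / Q is a point of Sigma. *)
Lemma hibi_mnm_deg_le (Q : nat) (h : mnm) : (0 < Q)%N -> hibi_mnm h ->
  (forall a b, pbar_covers a b -> mnm_fun h a - mnm_fun h b <= Q%:Z) ->
  (h (varT P) <= K PBot * Q)%N.
Proof.
move=> Q_gt0 hh small; have Q_pos : (0 : R) < Q%:R by rewrite ltr0n.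
pose psi a : R := (mnm_fun h a)%:~R / Q%:R.
have Spsi : in_Sigma psi.
  split=> [|a b ab]; first by rewrite /psi hh.1 mul0r.
  rewrite /psi -mulrBl -intrB; split.
    by rewrite divr_ge0 ?ler0n // ler0z subr_ge0; apply: hh.2.
  by rewrite ler_pdivrMr // mul1r -[Q%:R]/((Q%:Z)%:~R) ler_int small.
by have := K_max Spsi; rewrite /psi ler_pdivrMr // -natrM ler_nat.
Qed.

Lemma additive_hibi_sum (phi : pR -> pR) (r : seq mnm) (F : mnm -> pR) :
  (forall s1 s2, inHibi s1 -> inHibi s2 -> phi (s1 + s2) = phi s1 + phi s2) ->
  (forall m, m \in r -> inHibi (F m)) ->
  phi (\sum_(m <- r) F m) = \sum_(m <- r) phi (F m).
Proof.
move=> phiD; elim: r => [_|m r IH Fr].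
  rewrite !big_nil; apply: (addrI (phi 0)); rewrite -phiD ?addr0 //; exact: inHibi0.
have Fr' m' : m' \in r -> inHibi (F m') by move=> m'r; apply: Fr; rewrite inE m'r orbT.
have Fm : inHibi (F m) by apply: Fr; rewrite inE eqxx.
have Fsum : inHibi (\sum_(m' <- r) F m').
  by rewrite big_seq; apply: big_ind => [|x y|m' /Fr'] //; [exact: inHibi0|exact: Hibi_add].
by rewrite !big_cons phiD // IH.
Qed.

Variable p : nat.
Hypotheses (pchar_p : p \in [pchar k]) (perf : perfect_field k p).

(* Writing d as a sum of terms c X^m = (c^(1/q))^q X^m, the constant term of
   phi(d) = 1 is a combination of the constant terms of the phi(X^m). *)
Lemma frob_splits_msupp e (d : pR) : inHibi d -> frob_splits (p ^ e) d ->
  exists phi : pR -> pR, [/\ forall s, inHibi s -> inHibi (phi s),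
    forall r s, inHibi r -> inHibi s -> phi (r ^+ (p ^ e) * s) = r * phi s
  & exists2 m, m \in msupp d & (phi 'X_[m])@_0%MM != 0].
Proof.
move=> hd [phi [phi_hibi phiD phi_frob phi_d]]; exists phi; split => //.
have term m : m \in msupp d ->
    phi (d@_m *: 'X_[m]) = (proot perf e d@_m)%:MP * phi 'X_[m].
  move=> md; rewrite -mul_mpolyC -{1}(prootK perf e d@_m) rmorphXn /=.
  by rewrite phi_frob //; [exact: Hibi_const|exact: inHibi_X (inHibi_msupp hd md)].
apply/hasP; apply: contraLR isT => /hasPn zero.
have := congr1 (mcoeff 0%MM) phi_d; rewrite {1}(mpolyE d) additive_hibi_sum //.
  rewrite raddf_sum big_seq big1 => [|m md]; first by rewrite mcoeff1 eqxx => /esym/eqP; rewrite oner_eq0.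
  by rewrite term // /= mcoeffCM (eqP (negbNE (zero m md))) mulr0.
move=> m md; rewrite -mul_mpolyC; apply: Hibi_mul; first exact: Hibi_const.
exact: inHibi_X (inHibi_msupp hd md).
Qed.

Lemma Fpure_le_max (t : R) : Fpure_pair k P p t -> t <= (K PBot)%:R.
Proof.
case=> e0 Fpure; rewrite leNgt; apply/negP => Kt.
pose e := maxn e0 1; have [d [dN d_splits]] := Fpure e (leq_maxl _ _).
have Q_gt0 : (0 < (p ^ e).-1)%N.
  rewrite -subn1 subn_gt0 (leq_trans (prime_gt1 (pcharf_prime pchar_p))) //.
  by rewrite -[X in (X <= _)%N]expn1 leq_pexp2l ?leq_maxr ?prime_gt0 ?(pcharf_prime pchar_p).
have hd := inMpow_inHibi dN.
have [phi [phi_hibi phi_frob [m md phi_m]]] := frob_splits_msupp hd d_splits.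
have hm := inHibi_msupp hd md.
have small a b : pbar_covers a b -> mnm_fun m a - mnm_fun m b <= ((p ^ e).-1)%:Z.
  move=> ab; have := split_coef0_jump phi_hibi phi_frob hm phi_m ab.
  by rewrite -(prednK (pchar_expn_gt0 e pchar_p)); lia.
have := hibi_mnm_deg_le Q_gt0 hm small.
by rewrite leqNgt (leq_trans (ceil_mulr_nat_gt Kt Q_gt0) (inMpow_msupp_deg dN md)).
Qed.

End UpperBound.

Unset Implicit Arguments.
Set Strict Implicit.

Theorem theorem3p7 (R : realType) (k : fieldType) (p : nat)
  (disp : Order.disp_t) (P : finPOrderType disp) :
  prime p -> p \in [pchar k] -> perfect_field k p ->
  exists2 psi0 : pbar P -> R, in_Sigma psi0 &
    (forall psi : pbar P -> R, in_Sigma psi -> psi PBot <= psi0 PBot) /\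
    is_fpt k P p (psi0 PBot).
Proof.
move=> _ pchar_p perf.
have [K [SK K_max]] := Sigma_max R P.
have [K_top K_step] := Sigma_nat_step SK.
exists (fun a => (K a)%:R : R) => //; split => //; split.
- by move=> t _ Ft; exact (Fpure_le_max K_max pchar_p perf Ft).
- move=> b b_ub; apply: b_ub; first exact: ler0n.
  exact (Fpure_at_max pchar_p perf K_top K_step R).
Qed.
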